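(* Let $a_k=\ln(k\ln^2k)$ for $k\ge3$ (the coupon weights being $a_3,a_4,\dots$). Then $\lim_{N\to\infty}E[U_j^N]=\infty$ for all $j\ge2$.
   Context: For $N\ge3$ there are coupon types $k\in\{3,\dots,N\}$ with probabilities $a_k/\sum_{i=3}^Na_i$; $U_j^N$ is the number of empty album places of the $j$-th collector when the first collector completes her set (each collector passes duplicates to the next one), with $$E[U_j^N]=\sum_{k=3}^N\int_0^\infty a_k e^{-a_k t}\frac{(a_kt)^{j-1}}{(j-1)!}\prod_{i\ne k,\,3\le i\le N}\big(1-e^{-a_i t}\big)\,dt.$$ *)

From Stdlib Require Import Reals Lra Lia Arith List ClassicalEpsilon.
Import ListNotations.
Open Scope R_scope.

Definition a (k : nat) : R := ln (INR k * (ln (INR k)) ^ 2).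

Definition improper_int_0_inf (f : R -> R) (l : R) : Prop :=
  (forall b, 0 <= b -> inhabited (Riemann_integrable f 0 b)) /\
  (forall eps, 0 < eps -> exists M, forall b (pr : Riemann_integrable f 0 b),
      M <= b -> Rabs (RiemannInt pr - l) < eps).

(* the value of the improper integral (chosen by Hilbert epsilon;
   meaningful when the integral exists) *)
Definition Int_0_inf (f : R -> R) : R :=
  epsilon (inhabits 0) (improper_int_0_inf f).

(* indices 3..N *)
Definition idx (N : nat) : list nat := seq 3 (N - 2).

Definition integrand (j N k : nat) (t : R) : R :=
  a k * exp (- (a k * t)) * (a k * t) ^ (j - 1) / INR (fact (j - 1)) *
  fold_right Rmult 1
    (map (fun i => if Nat.eq_dec i k then 1 else 1 - exp (- (a i * t))) (idx N)).

Definition EU (j N : nat) : R :=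
  fold_right Rplus 0 (map (fun k => Int_0_inf (integrand j N k)) (idx N)).

(* Write the k-th integrand as the Erlang density c e^{-ct} (ct)^m / m! with
   c = a_k and m = j - 1, times the probability P_k(t) that every other coupon
   has appeared by time t.  Since 0 <= P_k <= 1 and the density has mass 1,
   each integral exists as a monotone bounded limit.  For t >= 1 every factor
   of P_k is at least 1 - e^{-a_i} = 1 - 1/(i ln^2 i), and these defects sum to
   at most 1/ln 2 < 2, so P_k >= e^{-4} uniformly in N.  Integrating over [1,2]
   then bounds the k-th integral below by a constant times
   a_k (e^{-a_k} - e^{-2 a_k}) >= 1/(2 k ln k), and sum_k 1/(k ln k) grows like
   ln ln N. *)

From Stdlib Require Import Reals Lra Lia Arith List ClassicalEpsilon.
From Coquelicot Require Import Coquelicot.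
Open Scope R_scope.

Section FiniteProducts.

Variable A : Type.
Implicit Types (l : list A) (g h : A -> R).

Lemma prod_map_nonneg l g :
  (forall i, In i l -> 0 <= g i) -> 0 <= fold_right Rmult 1 (map g l).
Proof.
  induction l as [|x l IH]; simpl; intros Hg; [lra|].
  apply Rmult_le_pos; auto.
Qed.

Lemma prod_map_le l g h :
  (forall i, In i l -> 0 <= g i <= h i) ->
  fold_right Rmult 1 (map g l) <= fold_right Rmult 1 (map h l).
Proof.
  induction l as [|x l IH]; simpl; intros Hgh; [lra|].
  destruct (Hgh x (or_introl eq_refl)).
  apply Rmult_le_compat; auto.
  apply prod_map_nonneg; intros i Hi; apply Hgh; auto.
Qed.

Lemma prod_map_le1 l g :
  (forall i, In i l -> 0 <= g i <= 1) -> fold_right Rmult 1 (map g l) <= 1.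
Proof.
  induction l as [|x l IH]; simpl; intros Hg; [lra|].
  destruct (Hg x (or_introl eq_refl)).
  assert (0 <= fold_right Rmult 1 (map g l))
    by (apply prod_map_nonneg; intros i Hi; apply Hg; auto).
  assert (fold_right Rmult 1 (map g l) <= 1) by auto.
  nra.
Qed.

Lemma sum_map_le l g h :
  (forall i, In i l -> g i <= h i) ->
  fold_right Rplus 0 (map g l) <= fold_right Rplus 0 (map h l).
Proof.
  induction l as [|x l IH]; simpl; intros Hgh; [lra|].
  apply Rplus_le_compat; auto.
Qed.

Lemma sum_map_scal l g C :
  fold_right Rplus 0 (map (fun i => C * g i) l) = C * fold_right Rplus 0 (map g l).
Proof. induction l as [|x l IH]; simpl; [ring|]. rewrite IH; ring. Qed.

Lemma exp_opp_2x_le_1_sub x : 0 <= x <= / 2 -> exp (- (2 * x)) <= 1 - x.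
Proof.
  intros Hx. rewrite exp_Ropp.
  pose proof (exp_ineq1_le (2 * x)). pose proof (exp_pos (2 * x)).
  apply Rmult_le_reg_r with (exp (2 * x)); auto.
  rewrite Rinv_l by lra. nra.
Qed.

Lemma prod_map_1_sub_ge_exp l g :
  (forall i, In i l -> 0 <= g i <= / 2) ->
  exp (- (2 * fold_right Rplus 0 (map g l))) <=
  fold_right Rmult 1 (map (fun i => 1 - g i) l).
Proof.
  induction l as [|x l IH]; simpl; intros Hg.
  - rewrite Rmult_0_r, Ropp_0, exp_0; lra.
  - replace (- (2 * (g x + fold_right Rplus 0 (map g l))))
      with (- (2 * g x) + - (2 * fold_right Rplus 0 (map g l))) by ring.
    rewrite exp_plus.
    apply Rmult_le_compat; try (left; apply exp_pos).
    + apply exp_opp_2x_le_1_sub, Hg; auto.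
    + apply IH; auto.
Qed.

End FiniteProducts.

Lemma sum_seq_telescope (F : nat -> R) s n :
  fold_right Rplus 0 (map (fun i => F (S i) - F i) (seq s n)) = F (s + n)%nat - F s.
Proof.
  revert s; induction n as [|n IH]; intros s; simpl.
  - rewrite Nat.add_0_r; ring.
  - rewrite IH, <- plus_n_Sm; simpl; ring.
Qed.

Lemma ln_diff_bounds x y : 0 < x -> 0 < y ->
  (y - x) / y <= ln y - ln x <= (y - x) / x.
Proof.
  intros Hx Hy.
  assert (Hle : forall u v, 0 < u -> 0 < v -> ln v - ln u <= (v - u) / u).
  { intros u v Hu Hv. rewrite <- ln_div by lra.
    pose proof (exp_ineq1_le (ln (v / u))). rewrite exp_ln in H.
    - replace ((v - u) / u) with (v / u - 1) by (field; lra). lra.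
    - apply Rdiv_lt_0_compat; lra. }
  split; [|auto].
  specialize (Hle y x Hy Hx).
  replace ((x - y) / y) with (- ((y - x) / y)) in Hle by (field; lra). lra.
Qed.

Lemma exp_le_mono x y : x <= y -> exp x <= exp y.
Proof. intros [Hlt|Heq]; [left; apply exp_increasing, Hlt|rewrite Heq; lra]. Qed.

Lemma INR_ge3 k : (3 <= k)%nat -> 3 <= INR k.
Proof. intros Hk. replace 3 with (INR 3) by (simpl; lra). now apply le_INR. Qed.

Lemma ln_INR_ge1 k : (3 <= k)%nat -> 1 <= ln (INR k).
Proof.
  intros Hk. rewrite <- (ln_exp 1).
  apply ln_le; [apply exp_pos|]. pose proof exp_le_3. pose proof (INR_ge3 k Hk). lra.
Qed.

Lemma ln_INR_le_a k : (3 <= k)%nat -> ln (INR k) <= a k.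
Proof.
  intros Hk. pose proof (INR_ge3 k Hk). pose proof (ln_INR_ge1 k Hk).
  assert (1 <= ln (INR k) ^ 2) by nra.
  apply ln_le; [lra|]. nra.
Qed.

Lemma a_ge1 k : (3 <= k)%nat -> 1 <= a k.
Proof. intros Hk. pose proof (ln_INR_ge1 k Hk). pose proof (ln_INR_le_a k Hk). lra. Qed.

Lemma exp_opp_a k : (3 <= k)%nat -> exp (- a k) = / (INR k * ln (INR k) ^ 2).
Proof.
  intros Hk. pose proof (INR_ge3 k Hk). pose proof (ln_INR_ge1 k Hk).
  unfold a. rewrite exp_Ropp, exp_ln; [reflexivity|nra].
Qed.

Lemma exp_opp_a_le_half k : (3 <= k)%nat -> exp (- a k) <= / 2.
Proof.
  intros Hk. pose proof (INR_ge3 k Hk). pose proof (ln_INR_ge1 k Hk).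
  rewrite exp_opp_a by auto. apply Rinv_le_contravar; [lra|nra].
Qed.

Lemma exp_opp_a_le_telescope k : (3 <= k)%nat ->
  exp (- a k) <= / ln (INR k - 1) - / ln (INR k).
Proof.
  intros Hk. pose proof (INR_ge3 k Hk). pose proof (ln_INR_ge1 k Hk).
  rewrite exp_opp_a by auto.
  set (L := ln (INR k)) in *. set (L1 := ln (INR k - 1)).
  assert (HL1 : 0 < L1) by (unfold L1; rewrite <- ln_1; apply ln_increasing; lra).
  assert (Hgap : / INR k <= L - L1).
  { destruct (ln_diff_bounds (INR k - 1) (INR k)) as [Hd _]; try lra.
    replace ((INR k - (INR k - 1)) / INR k) with (/ INR k) in Hd by (field; lra).
    exact Hd. }
  assert (HL1L : L1 <= L) by (pose proof (Rinv_0_lt_compat (INR k)); lra).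
  replace (/ L1 - / L) with ((L - L1) * / L1 * / L) by (field; lra).
  replace (/ (INR k * L ^ 2)) with (/ INR k * / L * / L) by (field; lra).
  assert (/ L <= / L1) by (apply Rinv_le_contravar; lra).
  assert (0 < / L) by (apply Rinv_0_lt_compat; lra).
  assert (0 < / INR k) by (apply Rinv_0_lt_compat; lra).
  apply Rmult_le_compat; nra.
Qed.

Lemma sum_exp_opp_a_le s n : (3 <= s)%nat ->
  fold_right Rplus 0 (map (fun i => exp (- a i)) (seq s n)) <= / ln (INR s - 1).
Proof.
  intros Hs.
  set (F := fun i => - / ln (INR i - 1)).
  eapply Rle_trans.
  - apply sum_map_le with (h := fun i => F (S i) - F i).
    intros i Hi. apply in_seq in Hi. unfold F. rewrite S_INR.
    replace (INR i + 1 - 1) with (INR i) by ring.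
    pose proof (exp_opp_a_le_telescope i ltac:(lia)). lra.
  - rewrite sum_seq_telescope. unfold F.
    pose proof (INR_ge3 (s + n) ltac:(lia)).
    assert (0 < / ln (INR (s + n) - 1)).
    { apply Rinv_0_lt_compat. rewrite <- ln_1. apply ln_increasing; lra. }
    lra.
Qed.

Lemma sum_inv_k_ln_k_ge s n : (2 <= s)%nat ->
  ln (ln (INR (s + n))) - ln (ln (INR s)) <=
  fold_right Rplus 0 (map (fun k => / (INR k * ln (INR k))) (seq s n)).
Proof.
  intros Hs. rewrite <- (sum_seq_telescope (fun i => ln (ln (INR i)))).
  apply sum_map_le. intros i Hi. apply in_seq in Hi.
  assert (H2 : 2 <= INR i) by (replace 2 with (INR 2) by (simpl; lra); apply le_INR; lia).
  rewrite S_INR.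
  set (L := ln (INR i)). set (L' := ln (INR i + 1)).
  assert (HL : 0 < L) by (unfold L; rewrite <- ln_1; apply ln_increasing; lra).
  destruct (ln_diff_bounds (INR i) (INR i + 1)) as [_ Hd]; try lra. fold L L' in Hd.
  assert (HLL : L <= L') by (apply ln_le; lra).
  destruct (ln_diff_bounds L L') as [_ Hdd]; try lra.
  eapply Rle_trans; [exact Hdd|].
  replace (/ (INR i * L)) with ((INR i + 1 - INR i) / INR i / L) by (field; lra).
  apply Rmult_le_compat_r; [left; apply Rinv_0_lt_compat; lra|lra].
Qed.

Definition erlang (c : R) (m : nat) (t : R) : R :=
  c * exp (- (c * t)) * (c * t) ^ m / INR (fact m).

(* Survival function of the Erlang law: [P(Gamma(m+1, c) > t)]. *)
Definition erlang_tail (c : R) (m : nat) (t : R) : R :=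
  exp (- (c * t)) * sum_f_R0 (fun i => (c * t) ^ i / INR (fact i)) m.

Lemma erlang_nonneg c m t : 0 <= c -> 0 <= t -> 0 <= erlang c m t.
Proof.
  intros Hc Ht. unfold erlang. pose proof (exp_pos (- (c * t))).
  apply Rdiv_le_0_compat; [|apply INR_fact_lt_0].
  apply Rmult_le_pos; [nra|apply pow_le; nra].
Qed.

Lemma erlang_continuous c m t : continuous (erlang c m) t.
Proof.
  apply (@ex_derive_continuous R_AbsRing R_NormedModule).
  unfold erlang. auto_derive. auto.
Qed.

Lemma is_derive_erlang_tail c m t :
  is_derive (erlang_tail c m) t (- erlang c m t).
Proof.
  induction m as [|m IH].
  - unfold erlang_tail, erlang; simpl. auto_derive; auto. field.
  - apply is_derive_ext with
      (fun t => erlang_tail c m t + exp (- (c * t)) * ((c * t) ^ S m / INR (fact (S m)))).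
    { intros u. unfold erlang_tail. rewrite tech5. simpl. ring. }
    replace (- erlang c (S m) t)
      with (- erlang c m t + (erlang c m t - erlang c (S m) t)) by ring.
    apply (is_derive_plus _ _ t _ _ IH).
    auto_derive; auto.
    change (match m with 0%nat => 1 | S _ => INR m + 1 end) with (INR (S m)).
    change (fact m + m * fact m)%nat with (fact (S m)).
    unfold erlang. rewrite fact_simpl, mult_INR, S_INR.
    pose proof (INR_fact_neq_0 m). pose proof (pos_INR m).
    simpl pow. field. lra.
Qed.

Lemma RInt_erlang c m x y :
  RInt (erlang c m) x y = erlang_tail c m x - erlang_tail c m y.
Proof.
  apply is_RInt_unique.
  replace (erlang_tail c m x - erlang_tail c m y)
    with (minus (- erlang_tail c m y) (- erlang_tail c m x))
    by (unfold minus, plus, opp; simpl; ring).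
  apply (is_RInt_derive (fun t => - erlang_tail c m t)).
  - intros t _. rewrite <- (Ropp_involutive (erlang c m t)).
    apply (is_derive_opp (erlang_tail c m)), is_derive_erlang_tail.
  - intros t _. apply erlang_continuous.
Qed.

Lemma erlang_tail_0 c m : erlang_tail c m 0 = 1.
Proof.
  unfold erlang_tail. rewrite Rmult_0_r, Ropp_0, exp_0, Rmult_1_l.
  induction m as [|m IH]; [simpl; field|].
  rewrite tech5, IH, pow_i by lia. unfold Rdiv; ring.
Qed.

Lemma erlang_tail_nonneg c m t : 0 <= c -> 0 <= t -> 0 <= erlang_tail c m t.
Proof.
  intros Hc Ht. unfold erlang_tail.
  apply Rmult_le_pos; [left; apply exp_pos|].
  induction m as [|m IH]; [simpl; lra|]. rewrite tech5.
  assert (0 <= (c * t) ^ S m / INR (fact (S m))).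
  { apply Rdiv_le_0_compat; [apply pow_le; nra|apply INR_fact_lt_0]. }
  lra.
Qed.

Lemma RInt_erlang_le1 c m b : 0 <= c -> 0 <= b -> RInt (erlang c m) 0 b <= 1.
Proof.
  intros Hc Hb. rewrite RInt_erlang, erlang_tail_0.
  pose proof (erlang_tail_nonneg c m b Hc Hb). lra.
Qed.

Lemma RInt_erlang0_1_2 c : RInt (erlang c 0) 1 2 = exp (- c) - exp (- c) ^ 2.
Proof.
  rewrite RInt_erlang. unfold erlang_tail; simpl.
  rewrite Rmult_1_r. replace (- (c * 2)) with (- c + - c) by ring.
  rewrite exp_plus. field.
Qed.

Lemma ex_RInt_of_continuous (f : R -> R) x y :
  (forall t, continuous f t) -> ex_RInt f x y.
Proof. intros Hf. apply (@ex_RInt_continuous R_CompleteNormedModule). auto. Qed.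

Lemma RInt_nonneg_subinterval (f : R -> R) x y z :
  (forall t, continuous f t) -> (forall t, x <= t -> 0 <= f t) -> x <= y <= z ->
  RInt f x y <= RInt f x z /\ RInt f y z <= RInt f x z.
Proof.
  intros Hc Hf Hxyz.
  rewrite <- (RInt_Chasles f x y z) by auto using ex_RInt_of_continuous.
  change (plus (RInt f x y) (RInt f y z)) with (RInt f x y + RInt f y z).
  assert (0 <= RInt f x y).
  { apply RInt_ge_0; try lra; auto using ex_RInt_of_continuous.
    intros; apply Hf; lra. }
  assert (0 <= RInt f y z).
  { apply RInt_ge_0; try lra; auto using ex_RInt_of_continuous.
    intros; apply Hf; lra. }
  lra.
Qed.

(* The limit is the supremum of the partial integrals. *)
Lemma improper_int_of_bounded (f : R -> R) B :
  (forall t, continuous f t) -> (forall t, 0 <= t -> 0 <= f t) ->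
  (forall b, 0 <= b -> RInt f 0 b <= B) ->
  exists l, improper_int_0_inf f l /\ (forall b, 0 <= b -> RInt f 0 b <= l).
Proof.
  intros Hc Hf HB.
  assert (mono : forall b1 b2, 0 <= b1 <= b2 -> RInt f 0 b1 <= RInt f 0 b2)
    by (intros b1 b2 Hb; apply RInt_nonneg_subinterval; auto).
  set (E := fun y => exists b, 0 <= b /\ y = RInt f 0 b).
  destruct (completeness E) as [l [Hub Hleast]].
  { exists B. intros y [b [Hb ->]]. auto. }
  { exists (RInt f 0 0), 0. split; auto; lra. }
  exists l. split.
  - split.
    { intros b Hb. constructor. apply ex_RInt_Reals_0, ex_RInt_of_continuous, Hc. }
    intros eps Heps.
    destruct (classic (exists b, 0 <= b /\ l - eps < RInt f 0 b)) as [[b0 [Hb0 Hlt]]|Hn].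
    + exists b0. intros b pr Hb. rewrite <- RInt_Reals.
      assert (RInt f 0 b <= l) by (apply Hub; exists b; split; auto; lra).
      assert (RInt f 0 b0 <= RInt f 0 b) by (apply mono; lra).
      apply Rabs_def1; lra.
    + exfalso. assert (l <= l - eps); [|lra]. apply Hleast.
      intros y [b [Hb ->]]. apply Rnot_lt_le. intro; apply Hn; eauto.
  - intros b Hb. apply Hub. exists b; auto.
Qed.

Lemma improper_int_unique f l1 l2 :
  improper_int_0_inf f l1 -> improper_int_0_inf f l2 -> l1 = l2.
Proof.
  intros [Hex H1] [_ H2]. destruct (Req_dec l1 l2) as [E|E]; auto. exfalso.
  set (eps := Rabs (l1 - l2) / 2).
  assert (Heps : 0 < eps).
  { unfold eps. assert (0 < Rabs (l1 - l2)) by (apply Rabs_pos_lt; lra). lra. }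
  destruct (H1 eps Heps) as [M1 HM1]. destruct (H2 eps Heps) as [M2 HM2].
  set (b := Rmax 0 (Rmax M1 M2)).
  destruct (Hex b (Rmax_l _ _)) as [pr].
  assert (Hb1 : M1 <= b) by (unfold b; eapply Rle_trans; [apply Rmax_l|apply Rmax_r]).
  assert (Hb2 : M2 <= b) by (unfold b; eapply Rle_trans; [apply Rmax_r|apply Rmax_r]).
  specialize (HM1 b pr Hb1). specialize (HM2 b pr Hb2).
  unfold eps in *. revert HM1 HM2. split_Rabs; lra.
Qed.

Lemma Int_0_inf_eq f l : improper_int_0_inf f l -> Int_0_inf f = l.
Proof.
  intros Hl. apply (improper_int_unique f); auto.
  unfold Int_0_inf. apply epsilon_spec. eauto.
Qed.

Definition others_collected (N k : nat) (t : R) : R :=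
  fold_right Rmult 1
    (map (fun i => if Nat.eq_dec i k then 1 else 1 - exp (- (a i * t))) (idx N)).

Lemma integrand_eq j N k :
  integrand j N k = fun t => erlang (a k) (j - 1) t * others_collected N k t.
Proof. reflexivity. Qed.

Lemma in_idx N i : In i (idx N) -> (3 <= i <= N)%nat.
Proof. unfold idx. rewrite in_seq. lia. Qed.

Lemma others_collected_bounds N k t : 0 <= t -> 0 <= others_collected N k t <= 1.
Proof.
  intros Ht.
  assert (Hfactor : forall i, In i (idx N) ->
    0 <= (if Nat.eq_dec i k then 1 else 1 - exp (- (a i * t))) <= 1).
  { intros i Hi. destruct (Nat.eq_dec i k); [lra|].
    pose proof (a_ge1 i ltac:(apply in_idx in Hi; lia)).
    pose proof (exp_pos (- (a i * t))).
    assert (exp (- (a i * t)) <= 1) by (rewrite <- exp_0; apply exp_le_mono; nra).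
    lra. }
  split; [apply prod_map_nonneg | apply prod_map_le1]; intros i Hi; apply Hfactor, Hi.
Qed.

(* Uniform in [N]: [sum_(i >= 3) e^{-a_i} <= 1/ln 2 < 2]. *)
Lemma others_collected_ge N k t : 1 <= t -> exp (-4) <= others_collected N k t.
Proof.
  intros Ht.
  apply Rle_trans with (fold_right Rmult 1 (map (fun i => 1 - exp (- a i)) (idx N))).
  - eapply Rle_trans; [|apply prod_map_1_sub_ge_exp].
    + apply exp_le_mono.
      pose proof (sum_exp_opp_a_le 3 (N - 2) ltac:(lia)) as Hsum.
      replace (INR 3 - 1) with 2 in Hsum by (simpl; lra).
      assert (/ ln 2 < 2).
      { pose proof ln_lt_2. apply (Rmult_lt_reg_l (ln 2)); [lra|].
        rewrite Rinv_r; lra. }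
      unfold idx. lra.
    + intros i Hi. apply in_idx in Hi.
      pose proof (exp_pos (- a i)). pose proof (exp_opp_a_le_half i ltac:(lia)). lra.
  - apply prod_map_le. intros i Hi. apply in_idx in Hi.
    pose proof (a_ge1 i ltac:(lia)).
    pose proof (exp_opp_a_le_half i ltac:(lia)). pose proof (exp_pos (- a i)).
    destruct (Nat.eq_dec i k); [lra|].
    assert (exp (- (a i * t)) <= exp (- a i)) by (apply exp_le_mono; nra).
    lra.
Qed.

Lemma others_collected_continuous N k t : continuous (others_collected N k) t.
Proof.
  unfold others_collected. induction (idx N) as [|i l IH]; simpl.
  - apply continuous_const.
  - apply (continuous_mult (fun t => if Nat.eq_dec i k then 1 else 1 - exp (- (a i * t)))); auto.
    destruct (Nat.eq_dec i k); [apply continuous_const|].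
    apply (@ex_derive_continuous R_AbsRing R_NormedModule). auto_derive. auto.
Qed.

Section Term.

Variables j N k : nat.
Hypothesis Hj : (2 <= j)%nat.
Hypothesis Hk : (3 <= k)%nat.

Lemma integrand_continuous t : continuous (integrand j N k) t.
Proof.
  rewrite integrand_eq.
  apply (continuous_mult (erlang (a k) (j - 1))).
  - apply erlang_continuous.
  - apply others_collected_continuous.
Qed.

Lemma integrand_nonneg_le_erlang t : 0 <= t ->
  0 <= integrand j N k t <= erlang (a k) (j - 1) t.
Proof.
  intros Ht. rewrite integrand_eq.
  pose proof (erlang_nonneg (a k) (j - 1) t ltac:(pose proof (a_ge1 k Hk); lra) Ht).
  pose proof (others_collected_bounds N k t Ht). nra.
Qed.

(* For [t >= 1] and [c = a_k >= 1], [(c t)^{j-1} >= c t >= c]. *)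
Lemma integrand_ge_erlang0 t : 1 <= t ->
  exp (-4) * (a k / INR (fact (j - 1))) * erlang (a k) 0 t <= integrand j N k t.
Proof.
  intros Ht. rewrite integrand_eq. unfold erlang.
  pose proof (a_ge1 k Hk). pose proof (INR_fact_lt_0 (j - 1)).
  pose proof (others_collected_ge N k t Ht).
  set (c := a k) in *. set (F := INR (fact (j - 1))) in *.
  pose proof (exp_pos (- (c * t))). pose proof (exp_pos (-4)).
  assert (Hpow : c <= (c * t) ^ (j - 1)).
  { apply Rle_trans with (c * t); [nra|].
    rewrite <- (pow_1 (c * t)) at 1. apply Rle_pow; [nra|lia]. }
  simpl. unfold Rdiv. rewrite Rinv_1, !Rmult_1_r.
  replace (exp (-4) * (c * / F) * (c * exp (- (c * t))))
    with (c * exp (- (c * t)) * / F * (c * exp (-4))) by ring.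
  replace (c * exp (- (c * t)) * (c * t) ^ (j - 1) * / F * others_collected N k t)
    with (c * exp (- (c * t)) * / F * ((c * t) ^ (j - 1) * others_collected N k t)) by ring.
  apply Rmult_le_compat_l.
  - apply Rmult_le_pos; [nra|left; apply Rinv_0_lt_compat; lra].
  - apply Rmult_le_compat; nra.
Qed.

(* [2 a_k x (1 - x) >= x ln k] for [x = e^{-a_k} = 1/(k ln^2 k) <= 1/2]. *)
Lemma a_exp_window_ge :
  / (INR k * ln (INR k)) <= 2 * (a k * (exp (- a k) - exp (- a k) ^ 2)).
Proof.
  pose proof (INR_ge3 k Hk). pose proof (ln_INR_ge1 k Hk). pose proof (ln_INR_le_a k Hk).
  pose proof (exp_opp_a_le_half k Hk). pose proof (exp_pos (- a k)).
  assert (Hx : exp (- a k) * ln (INR k) = / (INR k * ln (INR k))).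
  { rewrite exp_opp_a by auto. field. lra. }
  assert (ln (INR k) <= 2 * a k * (1 - exp (- a k))) by nra.
  rewrite <- Hx. simpl. nra.
Qed.

Lemma integrand_improper : exists l, improper_int_0_inf (integrand j N k) l /\
  exp (-4) / (2 * INR (fact (j - 1))) * / (INR k * ln (INR k)) <= l.
Proof.
  set (f := integrand j N k).
  assert (Hf : forall t, 0 <= t -> 0 <= f t) by (intros; apply integrand_nonneg_le_erlang; auto).
  destruct (improper_int_of_bounded f 1 integrand_continuous Hf) as [l [Hl Hpartial]].
  { intros b Hb. eapply Rle_trans; [|apply (RInt_erlang_le1 (a k) (j - 1) b); auto].
    - apply RInt_le; auto using ex_RInt_of_continuous, erlang_continuous, integrand_continuous.
      intros; apply integrand_nonneg_le_erlang; lra.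
    - pose proof (a_ge1 k Hk); lra. }
  exists l. split; auto.
  set (K := exp (-4) * (a k / INR (fact (j - 1)))).
  assert (H12 : K * (exp (- a k) - exp (- a k) ^ 2) <= RInt f 1 2).
  { rewrite <- RInt_erlang0_1_2.
    rewrite <- (@RInt_scal R_CompleteNormedModule) by apply ex_RInt_of_continuous, erlang_continuous.
    apply RInt_le; try lra.
    - apply ex_RInt_of_continuous. intros t.
      apply (continuous_scal_r K (erlang (a k) 0)), erlang_continuous.
    - apply ex_RInt_of_continuous, integrand_continuous.
    - intros t Ht. apply integrand_ge_erlang0. lra. }
  assert (H02 : RInt f 1 2 <= RInt f 0 2)
    by (apply RInt_nonneg_subinterval; auto using integrand_continuous; lra).
  specialize (Hpartial 2 ltac:(lra)).
  apply Rle_trans with (K * (exp (- a k) - exp (- a k) ^ 2)); [|lra].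
  pose proof (INR_fact_lt_0 (j - 1)).
  replace (K * (exp (- a k) - exp (- a k) ^ 2))
    with (exp (-4) / (2 * INR (fact (j - 1))) * (2 * (a k * (exp (- a k) - exp (- a k) ^ 2))))
    by (unfold K; field; lra).
  apply Rmult_le_compat_l; [|apply a_exp_window_ge].
  apply Rdiv_le_0_compat; [left; apply exp_pos|lra].
Qed.

End Term.

Lemma EU_ge j N : (2 <= j)%nat -> (2 <= N)%nat ->
  exp (-4) / (2 * INR (fact (j - 1))) * (ln (ln (INR (S N))) - ln (ln 3)) <= EU j N.
Proof.
  intros Hj HN. unfold EU.
  set (C := exp (-4) / (2 * INR (fact (j - 1)))).
  assert (HC : 0 <= C).
  { apply Rdiv_le_0_compat; [left; apply exp_pos|].
    pose proof (INR_fact_lt_0 (j - 1)). lra. }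
  eapply Rle_trans;
    [|apply sum_map_le with (g := fun k => C * / (INR k * ln (INR k)))].
  - rewrite sum_map_scal. apply Rmult_le_compat_l; auto.
    replace 3 with (INR 3) by (simpl; lra).
    replace (S N) with (3 + (N - 2))%nat by lia.
    apply sum_inv_k_ln_k_ge. lia.
  - intros k Hk. apply in_idx in Hk.
    destruct (integrand_improper j N k Hj ltac:(lia)) as [l [Hl Hlow]].
    rewrite (Int_0_inf_eq _ _ Hl). exact Hlow.
Qed.

Lemma cv_infty_ln_ln_INR_S : cv_infty (fun n => ln (ln (INR (S n)))).
Proof.
  intros M. destruct (INR_unbounded (exp (exp M))) as [N0 HN0].
  exists N0. intros n Hn.
  assert (H1 : exp (exp M) < INR (S n)) by (pose proof (le_INR N0 (S n) ltac:(lia)); lra).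
  assert (H2 : exp M < ln (INR (S n))).
  { rewrite <- (ln_exp (exp M)). apply ln_increasing; auto. apply exp_pos. }
  rewrite <- (ln_exp M). apply ln_increasing; auto. apply exp_pos.
Qed.

Lemma cv_infty_of_affine_minorant (u v : nat -> R) C D n0 :
  0 < C -> cv_infty v -> (forall n, (n0 <= n)%nat -> C * v n + D <= u n) ->
  cv_infty u.
Proof.
  intros HC Hv Hle M. destruct (Hv ((M - D) / C)) as [N0 HN0].
  exists (max N0 n0). intros n Hn.
  specialize (HN0 n ltac:(lia)). specialize (Hle n ltac:(lia)).
  apply Rmult_lt_compat_l with (r := C) in HN0; auto.
  replace (C * ((M - D) / C)) with (M - D) in HN0 by (field; lra).
  lra.
Qed.

Theorem mainTheorem14 :
  forall j : nat, (2 <= j)%nat ->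
    (forall N k : nat, (3 <= k <= N)%nat ->
       exists l, improper_int_0_inf (integrand j N k) l) /\
    cv_infty (fun N => EU j N).
Proof.
  intros j Hj. split.
  - intros N k Hk. destruct (integrand_improper j N k Hj ltac:(lia)) as [l [Hl _]]. eauto.
  - set (C := exp (-4) / (2 * INR (fact (j - 1)))).
    assert (HC : 0 < C).
    { apply Rdiv_lt_0_compat; [apply exp_pos|].
      pose proof (INR_fact_lt_0 (j - 1)). lra. }
    apply (cv_infty_of_affine_minorant _ _ C (- (C * ln (ln 3))) 2 HC cv_infty_ln_ln_INR_S).
    intros N HN. pose proof (EU_ge j N Hj HN) as HEU. fold C in HEU. cbv beta. lra.
Qed.
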